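(* Let $\lambda,\mu,\nu$ be partitions of the same integer with $\ell(\lambda)\le 4$ and $\ell(\mu),\ell(\nu)\le 2$. If $\nu_2<\lambda_3+\lambda_4$ or $\mu_2+\nu_2<\lambda_2+\lambda_3+2\lambda_4$, then the Kronecker coefficient $g_{\mu,\nu,\lambda}$ is zero. Equivalently, if $g_{\mu,\nu,\lambda}\ne0$ then $\lambda_2+\lambda_3+2\lambda_4\le\mu_2+\nu_2$ and $\lambda_3+\lambda_4\le\nu_2$.
   Context: Partitions are padded with zero parts. The Kronecker coefficient $g_{\mu,\nu,\lambda}$ is defined by $s_\lambda(x_1y_1,x_1y_2,x_2y_1,x_2y_2)=\sum_{\mu,\nu}g_{\mu,\nu,\lambda}\,s_\mu(x_1,x_2)s_\nu(y_1,y_2)$, with $s$ the Schur polynomials. *)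

From HB Require Import structures.
From mathcomp Require Import all_boot all_order all_algebra.
Set Implicit Arguments. Unset Strict Implicit. Unset Printing Implicit Defensive.
Import GRing.Theory.
Local Open Scope ring_scope.

(* A partition is a seq nat (nonincreasing; zero parts allowed as padding).
   Cells of the Young diagram of la: pairs (i,j) with i < size la, j < la_i.
   (j is bounded by sumn la, which exceeds every part.) *)
Definition cells (la : seq nat) :=
  {c : 'I_(size la) * 'I_(sumn la) | (c.2 < nth 0%N la c.1)%N}.

Definition ssyt (k : nat) (la : seq nat) (T : {ffun cells la -> 'I_k}) : bool :=
  [forall c : cells la, forall d : cells la,
     ((((val c).1 == (val d).1) && ((val c).2 <= (val d).2)%N) ==> (T c <= T d)%N)
     && ((((val c).2 == (val d).2) && ((val c).1 < (val d).1)%N) ==> (T c < T d)%N)].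

Definition schur (R : comNzRingType) (k : nat) (la : seq nat) (z : 'I_k -> R) : R :=
  \sum_(T : {ffun cells la -> 'I_k} | ssyt T) \prod_(c : cells la) z (T c).

Arguments schur {R} k la z.

(* Polynomial ring Z[x1,x2,y1,y2] as nested univariate polynomials. *)
Definition P1 := {poly int}.
Definition P2 := {poly P1}.
Definition P3 := {poly P2}.
Definition P4 := {poly P3}.
Definition X1 : P4 := 'X.
Definition X2 : P4 := ('X : P3)%:P.
Definition Y1 : P4 := (('X : P2)%:P : P3)%:P.
Definition Y2 : P4 := ((('X : P1)%:P : P2)%:P : P3)%:P.

Definition xvars (i : 'I_2) : P4 := if val i == 0%N then X1 else X2.
Definition yvars (i : 'I_2) : P4 := if val i == 0%N then Y1 else Y2.
Definition xyvars (i : 'I_4) : P4 :=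
  match val i with 0%N => X1 * Y1 | 1%N => X1 * Y2 | 2%N => X2 * Y1 | _ => X2 * Y2 end.

(* The defining identity of the Kronecker coefficients g_{mu,nu,la} for a
   partition la of n (with at most 4 parts):
   s_la(x1y1,x1y2,x2y1,x2y2) = sum_{mu,nu} g_{mu,nu,la} s_mu(x1,x2) s_nu(y1,y2),
   the sum over partitions mu = (n-i, i), nu = (n-j, j) of n with <= 2 parts. *)
Definition kronecker_identity (g : seq nat -> seq nat -> seq nat -> int)
    (la : seq nat) : Prop :=
  let n := sumn la in
  schur 4 la xyvars =
  \sum_(0 <= i < n.+1 | (i <= n - i)%N) \sum_(0 <= j < n.+1 | (j <= n - j)%N)
     (g [:: (n - i)%N; i] [:: (n - j)%N; j] la)%:~R
       * (schur 2 [:: (n - i)%N; i] xvars * schur 2 [:: (n - j)%N; j] yvars).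

From HB Require Import structures.
From mathcomp Require Import all_boot all_order all_algebra zify.
Import GRing.Theory.
Set Implicit Arguments.

(* Proof by a lowest-term argument after specialising x1 = y1 = 1, x2 = t^p,
   y2 = t^q in the defining identity.  On the right, s_(a,b)(1, t^p) has
   lowest term t^(p b) with coefficient 1 (the tableau filling row r with r).
   On the left, a tableau of shape la with entries in {0,..,3} contributes
   t^(sum of wt(entries)), where entry t stands for x_(1+[t>=2]) y_(1+[t odd]).
   If every such tableau has weight >= L and (i, j) |-> p i + q j is injective
   on the relevant range, then comparing the coefficients of t^(p i + q j) for
   the nonzero g minimising p i + q j shows that g vanishes whenever
   p m2 + q n2 < L (kronecker_vanish). *)

Lemma nth_le_sumn (s : seq nat) r : nth 0 s r <= sumn s.
Proof.
elim: s r => [|x s IH] [|r] //=; first exact: leq_addr.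
exact: leq_trans (IH r) (leq_addl _ _).
Qed.

Lemma sum_ltn_indicator {N m : nat} : m <= N -> \sum_(j < N) (j < m : nat) = m.
Proof.
move=> le_mN; rewrite (eq_bigr (fun j : 'I_N => if j < m then 1 else 0)); last first.
  by move=> j _; case: (j < m).
by rewrite -big_mkcond big_ord_narrow // sum1_card card_ord.
Qed.

Section Cells.
Variable la : seq nat.

(* Extension by zero of a function on the cells of la to the bounding box
   'I_(size la) * 'I_(sumn la); it lets us sum over cells row by row or
   column by column. *)
Definition ext (F : cells la -> nat) (x : 'I_(size la) * 'I_(sumn la)) : nat :=
  oapp F 0 (insub x).

Lemma ext_in F (x : 'I_(size la) * 'I_(sumn la)) (Hx : x.2 < nth 0 la x.1) :
  ext F x = F (exist _ x Hx).
Proof. by rewrite /ext insubT. Qed.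

Lemma ext_out F (x : 'I_(size la) * 'I_(sumn la)) : nth 0 la x.1 <= x.2 -> ext F x = 0.
Proof. by move=> Hx; rewrite /ext insubF // ltnNge Hx. Qed.

Lemma sum_cells F :
  \sum_(c : cells la) F c = \sum_(r < size la) \sum_(j < sumn la) ext F (r, j).
Proof.
rewrite pair_big /= (bigID (fun x : 'I_(size la) * 'I_(sumn la) => x.2 < nth 0 la x.1)) /=.
rewrite [X in _ = _ + X]big1 ?addn0; last first.
  by move=> x; rewrite -leqNgt -surjective_pairing; apply: ext_out.
rewrite (reindex_omap (val : cells la -> _) insub) /=; last first.
  by move=> x Hx; rewrite insubT.
apply: eq_big => c; first by rewrite -?surjective_pairing (valP c) valK eqxx.
by rewrite -?surjective_pairing /ext valK.
Qed.

Lemma sum_by_row (f : nat -> nat) :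
  \sum_(c : cells la) f (val c).1 = \sum_(r < size la) f r * nth 0 la r.
Proof.
rewrite sum_cells; apply: eq_bigr => r _.
rewrite -(sum_ltn_indicator (nth_le_sumn la r)) big_distrr /=.
apply: eq_bigr => j _; case: (ltnP j (nth 0 la r)) => Hj.
  by rewrite (@ext_in _ (r, j) Hj) muln1.
by rewrite ext_out ?muln0.
Qed.
End Cells.

Section Tableaux.
Variables (la : seq nat) (k : nat).
Hypothesis la_noninc : forall r, nth 0 la r.+1 <= nth 0 la r.
Variable T : {ffun cells la -> 'I_k}.
Hypothesis T_ssyt : ssyt T.

Lemma nth_noninc r r' : r <= r' -> nth 0 la r' <= nth 0 la r.
Proof.
move=> /subnKC <-; elim: (r' - r) => [|m IH]; first by rewrite addn0.
by rewrite addnS (leq_trans (la_noninc _)).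
Qed.

Lemma ssyt_col (c d : cells la) :
  (val c).2 = (val d).2 -> (val c).1 < (val d).1 -> T c < T d.
Proof.
move=> same_col lt_row; move/forallP: T_ssyt => /(_ c) /forallP /(_ d).
by case/andP=> _ /implyP; apply; rewrite same_col eqxx lt_row.
Qed.

Lemma cell_above (c : cells la) r : r <= (val c).1 ->
  exists d : cells la, (val d).1 = r :> nat /\ (val d).2 = (val c).2.
Proof.
move=> le_r.
have r_lt : r < size la by apply: leq_ltn_trans le_r (ltn_ord _).
have in_row : (val c).2 < nth 0 la (Ordinal r_lt).
  by apply: (leq_trans (valP c)); apply: nth_noninc.
by exists (exist _ (Ordinal r_lt, (val c).2) in_row).
Qed.

(* Columns strictly increase, so the entry of a cell is at least its row index. *)
Lemma row_le_entry (c : cells la) : (val c).1 <= T c.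
Proof.
move Er : (nat_of_ord (val c).1) => r; elim: r c Er => [//|r IH] c Er.
have [d [d_row d_col]] : exists d : cells la, (val d).1 = r :> nat /\ (val d).2 = (val c).2.
  by apply: cell_above; rewrite Er.
have lt_dc : T d < T c by apply: ssyt_col; rewrite // d_row Er.
exact: leq_ltn_trans (IH d d_row) lt_dc.
Qed.

Lemma entry_eq_row :
  \sum_(c : cells la) (T c : nat) = \sum_(c : cells la) (val c).1 ->
  forall c, (T c : nat) = (val c).1.
Proof.
move=> Esum c; apply/eqP; rewrite eqn_leq row_le_entry andbT -subn_eq0.
have /eqP := sumnB (index_enum (cells la)) (P := xpredT) (fun c _ => row_le_entry c).
by rewrite Esum subnn sum_nat_eq0 => /forallP /(_ c).
Qed.
End Tableaux.

Section TwoRows.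
Variables a b : nat.
Let la := [:: a; b].
Hypothesis le_ba : b <= a.

Lemma two_rows_noninc r : nth 0 la r.+1 <= nth 0 la r.
Proof. by case: r => [|[|r]] //=; rewrite nth_nil. Qed.

(* The degree in the second variable of the monomial of a tableau with
   entries in {0, 1}. *)
Definition deg2 (T : {ffun cells la -> 'I_2}) : nat := \sum_(c : cells la) (T c : nat).

Lemma sum_rows_two : \sum_(c : cells la) (val c).1 = b.
Proof. by rewrite (sum_by_row la id) !big_ord_recl big_ord0 /= mul1n addn0. Qed.

Lemma deg2_ge {T : {ffun cells la -> 'I_2}} : ssyt T -> b <= deg2 T.
Proof.
move=> T_ssyt; rewrite -sum_rows_two; apply: leq_sum => c _.
exact: row_le_entry two_rows_noninc T T_ssyt c.
Qed.

Definition row_tableau : {ffun cells la -> 'I_2} := [ffun c => (val c).1].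

Lemma row_tableau_ssyt : ssyt row_tableau.
Proof.
apply/forallP => c; apply/forallP => d; rewrite !ffunE.
by apply/andP; split; apply/implyP => /andP [] // /eqP ->.
Qed.

Lemma deg2_row_tableau : deg2 row_tableau = b.
Proof. by rewrite /deg2 -sum_rows_two; apply: eq_bigr => c _; rewrite ffunE. Qed.

Lemma lowest_deg2_unique :
  \sum_(T : {ffun cells la -> 'I_2} | ssyt T) (deg2 T == b : nat) = 1.
Proof.
rewrite (bigD1 row_tableau) ?row_tableau_ssyt //= deg2_row_tableau eqxx.
rewrite big1 // => T /andP [T_ssyt neq]; case: eqP => // Edeg.
have E : T = row_tableau.
  apply/ffunP => c; apply: val_inj; rewrite ffunE /=.
  by apply: (@entry_eq_row _ _ two_rows_noninc T T_ssyt); rewrite sum_rows_two -Edeg.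
by rewrite E eqxx in neq.
Qed.
End TwoRows.

Section FourRows.
Variables l1 l2 l3 l4 : nat.
Hypotheses (le43 : l4 <= l3) (le32 : l3 <= l2) (le21 : l2 <= l1).
Let la := [:: l1; l2; l3; l4].

Lemma four_rows_noninc r : nth 0 la r.+1 <= nth 0 la r.
Proof. by case: r => [|[|[|[|r]]]] //=; rewrite nth_nil. Qed.

Variable T : {ffun cells la -> 'I_4}.
Hypothesis T_ssyt : ssyt T.

(* rk t = [t >= 1] + [t >= 3] is monotone in t, and its sum over the row
   indices of the cells of la is l2 + l3 + 2 l4; as entries dominate row
   indices, this bounds the rk-weight of any tableau of shape la. *)
Definition rk (t : nat) : nat := (1 <= t) + (3 <= t).

Lemma rk_bound : l2 + l3 + 2 * l4 <= \sum_(c : cells la) rk (T c).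
Proof.
have -> : l2 + l3 + 2 * l4 = \sum_(c : cells la) rk (val c).1.
  by rewrite (sum_by_row la rk) !big_ord_recl big_ord0 /= /rk /=; lia.
apply: leq_sum => c _; have := row_le_entry four_rows_noninc T T_ssyt c.
by rewrite /rk; move: (nat_of_ord _) (nat_of_ord _) => r t le_rt; lia.
Qed.

Lemma odd_pair (t1 t2 : nat) : 1 <= t1 -> t1 < t2 -> t2 < 4 -> 1 <= odd t1 + odd t2.
Proof. by case: t1 => [|[|[|[|t1]]]] //; case: t2 => [|[|[|[|t2]]]]. Qed.

(* A column of height >= 3 contains an odd entry in rows 1, 2, and a column
   of height 4 contains moreover the entry 3 in row 3. *)
Lemma column_odd_bound (j : 'I_(sumn la)) :
  (j < l3) + (j < l4) <= \sum_(r < size la) ext (fun c => odd (T c)) (r, j).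
Proof.
rewrite !big_ord_recl big_ord0 addn0.
have extE (r : 'I_(size la)) (Hr : j < nth 0 la r) :
    ext (fun c => odd (T c)) (r, j) = odd (T (exist _ (r, j) Hr)) by rewrite ext_in.
have [lt_j3|le3j] := ltnP j l3; last by rewrite (leq_gtF (leq_trans le43 le3j)).
have in1 : j < nth 0 la (lift ord0 ord0 : 'I_(size la)) := leq_trans lt_j3 le32.
have in2 : j < nth 0 la (lift ord0 (lift ord0 ord0) : 'I_(size la)) by [].
pose c1 : cells la := exist _ (lift ord0 ord0, j) in1.
pose c2 : cells la := exist _ (lift ord0 (lift ord0 ord0), j) in2.
have one_odd : 1 <= odd (T c1) + odd (T c2).
  apply: odd_pair (ltn_ord _); first exact: (row_le_entry four_rows_noninc T T_ssyt c1).
  exact: (@ssyt_col _ _ T T_ssyt c1 c2).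
rewrite (extE _ in1) (extE _ in2) -/c1 -/c2.
have [lt_j4|_] := ltnP j l4; last by move: one_odd; rewrite /=; lia.
have in3 : j < nth 0 la (lift ord0 (lift ord0 (lift ord0 ord0)) : 'I_(size la)) by [].
pose c3 : cells la := exist _ (lift ord0 (lift ord0 (lift ord0 ord0)), j) in3.
have T3 : (T c3 : nat) = 3.
  have := row_le_entry four_rows_noninc T T_ssyt c3; have := ltn_ord (T c3).
  by rewrite /= /bump /=; lia.
by rewrite (extE _ in3) -/c3 T3 /=; lia.
Qed.

Lemma odd_bound : l3 + l4 <= \sum_(c : cells la) odd (T c).
Proof.
have le3n : l3 <= sumn la by rewrite /=; lia.
have le4n : l4 <= sumn la by rewrite /=; lia.
apply: (@leq_trans (\sum_(j < sumn la) ((j < l3) + (j < l4)))).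
  by rewrite big_split (sum_ltn_indicator le3n) (sum_ltn_indicator le4n).
by rewrite sum_cells exchange_big; apply: leq_sum => j _; apply: column_odd_bound.
Qed.
End FourRows.

Local Open Scope ring_scope.

(* In a commutative ring every element commutes with the image of a morphism,
   so we may evaluate polynomials through any ring morphism. *)
Lemma comm_rmorph (R : comNzRingType) (S : nzRingType) (f : {rmorphism S -> R}) u :
  commr_rmorph f u.
Proof. by move=> x; rewrite /GRing.comm mulrC. Qed.

Section Specialisation.
Variables p q : nat.

(* The ring morphism Z[x1,x2,y1,y2] -> Z[t] with x1, y1 |-> 1, x2 |-> t^p and
   y2 |-> t^q, built from the innermost variable y2 outwards. *)
Definition eval_y2 : {rmorphism P1 -> P1} :=
  horner_morph (comm_rmorph (polyC : {rmorphism int -> P1}) 'X^q).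
Definition eval_y1 : {rmorphism P2 -> P1} := horner_morph (comm_rmorph eval_y2 1).
Definition eval_x2 : {rmorphism P3 -> P1} := horner_morph (comm_rmorph eval_y1 'X^p).
Definition phi : {rmorphism P4 -> P1} := horner_morph (comm_rmorph eval_x2 1).

Lemma phiX1 : phi X1 = 1.
Proof. by rewrite /phi /X1 /=; apply: horner_morphX. Qed.

Lemma phiX2 : phi X2 = 'X^p.
Proof. by rewrite /phi /X2 /= horner_morphC /eval_x2 /=; apply: horner_morphX. Qed.

Lemma phiY1 : phi Y1 = 1.
Proof.
rewrite /phi /Y1 /= horner_morphC /eval_x2 /= horner_morphC /eval_y1 /=.
exact: horner_morphX.
Qed.

Lemma phiY2 : phi Y2 = 'X^q.
Proof.
rewrite /phi /Y2 /= horner_morphC /eval_x2 /= horner_morphC /eval_y1 /=.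
by rewrite horner_morphC /eval_y2 /=; apply: horner_morphX.
Qed.

Lemma phi_xvars (i : 'I_2) : phi (xvars i) = 'X^(p * i).
Proof. by case: i => [[|[|m]] Hm] //; rewrite /xvars /= ?phiX1 ?phiX2 ?muln0 ?muln1. Qed.

Lemma phi_yvars (i : 'I_2) : phi (yvars i) = 'X^(q * i).
Proof. by case: i => [[|[|m]] Hm] //; rewrite /yvars /= ?phiY1 ?phiY2 ?muln0 ?muln1. Qed.

(* Entry t of a 4-variable tableau stands for x_(1+[t>=2]) y_(1+[t odd]). *)
Definition wt (t : nat) : nat := p * (1 < t) + q * odd t.

Lemma phi_xyvars (i : 'I_4) : phi (xyvars i) = 'X^(wt i).
Proof.
case: i => [[|[|[|[|m]]]] Hm] //; rewrite /xyvars /wt /= rmorphM;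
  by rewrite ?phiX1 ?phiX2 ?phiY1 ?phiY2 ?mul1r ?mulr1 ?muln0 ?muln1 ?addn0 ?add0n ?exprD.
Qed.

Lemma phi_schur k la (z : 'I_k -> P4) (w : 'I_k -> nat) :
  (forall i, phi (z i) = 'X^(w i)) ->
  phi (schur k la z) = \sum_(T : {ffun cells la -> 'I_k} | ssyt T) 'X^(\sum_c w (T c)).
Proof.
move=> phi_z; rewrite /schur rmorph_sum; apply: eq_bigr => T _.
by rewrite rmorph_prod (eq_bigr _ (fun c _ => phi_z (T c))) prodrXr.
Qed.
End Specialisation.

Arguments phi_schur {p q k} la {z w}.

Lemma coef_sumX (I : finType) (P : pred I) (E : I -> nat) e :
  (\sum_(i | P i) 'X^(E i) : P1)`_e = (\sum_(i | P i) (E i == e : nat))%:R.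
Proof. by rewrite coef_sum natr_sum; apply: eq_bigr => i _; rewrite coefXn eq_sym. Qed.

Lemma coef_mul_sumX (I J : finType) (P : pred I) (Q : pred J)
    (E : I -> nat) (F : J -> nat) e :
  ((\sum_(i | P i) 'X^(E i)) * (\sum_(j | Q j) 'X^(F j)) : P1)`_e =
  (\sum_(i | P i) \sum_(j | Q j) (E i + F j == e : nat))%:R.
Proof.
rewrite mulr_suml coef_sum natr_sum; apply: eq_bigr => i _.
rewrite mulr_sumr coef_sum natr_sum; apply: eq_bigr => j _.
by rewrite -exprD coefXn eq_sym.
Qed.

Lemma double_sum_pick {V : nmodType} {r s : seq nat} {P Q : pred nat}
    {f : nat -> nat -> V} (a b : nat) :
  uniq r -> uniq s -> a \in r -> b \in s -> P a -> Q b ->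
  (forall i j, i \in r -> j \in s -> P i -> Q j -> (i, j) != (a, b) -> f i j = 0) ->
  \sum_(i <- r | P i) \sum_(j <- s | Q j) f i j = f a b.
Proof.
move=> r_uniq s_uniq ar bs Pa Qb f0.
have other_rows : \sum_(i <- r | i != a) (if P i then \sum_(j <- s | Q j) f i j else 0) = 0.
  apply: big1_seq => i /andP [neq_ia ir]; case: ifP => // Pi.
  by apply: big1_seq => j /andP [Qj js]; apply: f0; rewrite // xpair_eqE (negbTE neq_ia).
have other_cols : \sum_(j <- s | j != b) (if Q j then f a j else 0) = 0.
  apply: big1_seq => j /andP [neq_jb js]; case: ifP => // Qj.
  by apply: f0; rewrite // xpair_eqE eqxx (negbTE neq_jb).
rewrite big_mkcond (bigD1_seq a) //= Pa other_rows addr0.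
by rewrite big_mkcond (bigD1_seq b) //= Qb other_cols addr0.
Qed.

Section LowestTerm.
Variables (g : seq nat -> seq nat -> seq nat -> int) (la : seq nat) (p q L : nat).
Let n := sumn la.
Hypothesis g_identity : kronecker_identity g la.
Hypotheses (p_gt0 : (0 < p)%N) (q_gt0 : (0 < q)%N).
Hypothesis weight_ge : forall T : {ffun cells la -> 'I_4}, ssyt T ->
  (L <= \sum_(c : cells la) wt p q (T c))%N.
Hypothesis encode_inj : forall i j a b : nat, (i <= n)%N -> (j <= n)%N ->
  (a <= n)%N -> (b <= n)%N -> (p * i + q * j = p * a + q * b)%N -> i = a /\ j = b.

Definition pair_count e i j : nat :=
  \sum_(T1 : {ffun cells [:: (n - i)%N; i] -> 'I_2} | ssyt T1)
  \sum_(T2 : {ffun cells [:: (n - j)%N; j] -> 'I_2} | ssyt T2)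
    (p * deg2 T1 + q * deg2 T2 == e)%N.

Lemma coef_phi_schur2 e i j :
  (phi p q (schur 2 [:: (n - i)%N; i] xvars * schur 2 [:: (n - j)%N; j] yvars))`_e =
  (pair_count e i j)%:R.
Proof.
rewrite rmorphM (phi_schur _ (phi_xvars p q)) (phi_schur _ (phi_yvars p q)).
rewrite coef_mul_sumX /pair_count; congr (_%:R).
apply: eq_bigr => T1 _; apply: eq_bigr => T2 _.
by rewrite /deg2 !big_distrr.
Qed.

(* Tableaux of shape (a, b) have degree >= b, so nothing lies below
   t^(p i + q j), and the lowest term itself comes from a single pair. *)
Lemma pair_count_below e i j : (i <= n - i)%N -> (j <= n - j)%N ->
  (e < p * i + q * j)%N -> pair_count e i j = 0%N.
Proof.
move=> le_i le_j lt_e; rewrite /pair_count big1 // => T1 T1_ssyt.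
rewrite big1 // => T2 T2_ssyt; apply/eqP; rewrite eqb0 neq_ltn; apply/orP; right.
apply: leq_trans lt_e _; apply: leq_add; rewrite leq_mul2l deg2_ge ?orbT //.
Qed.

Lemma pair_count_min i j : (i <= n - i)%N -> (j <= n - j)%N ->
  pair_count (p * i + q * j)%N i j = 1%N.
Proof.
move=> le_i le_j; rewrite /pair_count.
transitivity (\sum_(T1 : {ffun cells [:: (n - i)%N; i] -> 'I_2} | ssyt T1)
  ((deg2 T1 == i) * \sum_(T2 : {ffun cells [:: (n - j)%N; j] -> 'I_2} | ssyt T2)
    (deg2 T2 == j)))%N.
  apply: eq_bigr => T1 T1_ssyt; rewrite [RHS]big_distrr; apply: eq_bigr => T2 T2_ssyt /=.
  have := deg2_ge le_i T1_ssyt; have := deg2_ge le_j T2_ssyt.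
  move: (deg2 T1) (deg2 T2) => d1 d2 le1 le2.
  have [<-|ne1] := eqVneq d1 i; have [<-|ne2] := eqVneq d2 j => //=; apply/eqP; nia.
by rewrite lowest_deg2_unique // -big_distrl /= lowest_deg2_unique // muln1.
Qed.

Lemma coef_lhs_below e : (e < L)%N -> (phi p q (schur 4 la xyvars))`_e = 0.
Proof.
move=> lt_eL; rewrite (phi_schur _ (phi_xyvars p q)) coef_sumX big1 //.
by move=> T T_ssyt; case: eqP => // E; have := weight_ge T T_ssyt; rewrite E leqNgt lt_eL.
Qed.

Lemma coef_rhs e : (phi p q (schur 4 la xyvars))`_e =
  \sum_(0 <= i < n.+1 | (i <= n - i)%N) \sum_(0 <= j < n.+1 | (j <= n - j)%N)
    g [:: (n - i)%N; i] [:: (n - j)%N; j] la * (pair_count e i j)%:R.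
Proof.
rewrite g_identity rmorph_sum coef_sum; apply: eq_bigr => i _.
rewrite rmorph_sum coef_sum; apply: eq_bigr => j _.
by rewrite rmorphM rmorph_int mulrzl coefMrz coef_phi_schur2 -mulrzr intz mulrC.
Qed.

Lemma kronecker_vanish m2 n2 : (m2 <= n - m2)%N -> (n2 <= n - n2)%N ->
  (p * m2 + q * n2 < L)%N -> g [:: (n - m2)%N; m2] [:: (n - n2)%N; n2] la = 0.
Proof.
move=> le_m le_n lt_L; apply/eqP; apply: contraT => g_neq0.
pose nonzero (x : 'I_n.+1 * 'I_n.+1) := [&& (x.1 <= n - x.1)%N, (x.2 <= n - x.2)%N &
  g [:: (n - x.1)%N; nat_of_ord x.1] [:: (n - x.2)%N; nat_of_ord x.2] la != 0].
have nz0 : nonzero (inord m2, inord n2).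
  by rewrite /nonzero /= !inordK ?le_m ?le_n ?g_neq0 // ltnS; lia.
case: (arg_minnP (fun x : 'I_n.+1 * 'I_n.+1 => p * x.1 + q * x.2)%N nz0).
move=> a /and3P [le_a1 le_a2 ga_neq0] a_min.
have lt_aL : (p * a.1 + q * a.2 < L)%N.
  by apply: leq_ltn_trans (a_min _ nz0) _; rewrite /= !inordK // ltnS; lia.
have := coef_rhs (p * a.1 + q * a.2)%N; rewrite coef_lhs_below //.
rewrite (double_sum_pick a.1 a.2) ?iota_uniq ?mem_index_iota ?ltn_ord //.
  by rewrite pair_count_min // mulr1 => /esym/eqP; rewrite (negbTE ga_neq0).
move=> i j; rewrite !mem_index_iota !ltnS => /andP [_ le_in] /andP [_ le_jn] le_i le_j neq.
have [->|gij_neq0] := eqVneq (g [:: (n - i)%N; i] [:: (n - j)%N; j] la) 0.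
  by rewrite mul0r.
rewrite pair_count_below ?mulr0 // ltn_neqAle.
have := a_min (inord i, inord j); rewrite /nonzero /= !inordK ?ltnS // le_i le_j.
move=> /(_ gij_neq0) ->; rewrite andbT; apply: contra neq => /eqP E.
have le_a1n : (a.1 <= n)%N by rewrite -ltnS.
have le_a2n : (a.2 <= n)%N by rewrite -ltnS.
by have [-> ->] := encode_inj _ _ _ _ le_in le_jn le_a1n le_a2n (esym E).
Qed.
End LowestTerm.

Local Close Scope ring_scope.

Lemma base_digits_inj {N i j a b : nat} : i < N -> a < N ->
  i + N * j = a + N * b -> i = a /\ j = b.
Proof.
move=> lt_iN lt_aN E.
have N_gt0 : 0 < N by apply: leq_ltn_trans lt_iN.
have := congr1 (modn^~ N) E; have := congr1 (divn^~ N) E.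
rewrite /= ![_ + N * _]addnC ![N * _]mulnC !modnMDl !divnMDl // !modn_small //.
by rewrite !divn_small // !addn0.
Qed.

Section TwoSpecialisations.
Variables (g : seq nat -> seq nat -> seq nat -> int) (l1 l2 l3 l4 : nat).
Hypotheses (le43 : l4 <= l3) (le32 : l3 <= l2) (le21 : l2 <= l1).
Let la := [:: l1; l2; l3; l4].
Let n := sumn la.
Hypothesis g_identity : kronecker_identity g la.

(* x2 |-> t, y2 |-> t^(n+1): the y2-degree of a tableau is its number of odd
   entries, at least l3 + l4, and i + (n+1) j encodes (i, j) in base n+1. *)
Lemma vanish_small_nu2 m2 n2 : m2 <= n - m2 -> n2 <= n - n2 -> n2 < l3 + l4 ->
  g [:: n - m2; m2] [:: n - n2; n2] la = 0.
Proof.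
move=> le_m le_n lt_n2.
apply: (@kronecker_vanish _ _ 1 n.+1 (n.+1 * (l3 + l4)) g_identity) => //.
- move=> T T_ssyt; apply: (@leq_trans (n.+1 * \sum_(c : cells la) odd (T c))).
    by rewrite leq_mul2l odd_bound.
  by rewrite big_distrr /=; apply: leq_sum => c _; rewrite /wt leq_addl.
- move=> i j a b le_in _ le_an _; rewrite !mul1n.
  by apply: base_digits_inj; rewrite ltnS.
- have : n.+1 * n2.+1 <= n.+1 * (l3 + l4) by rewrite leq_mul2l lt_n2 orbT.
  by rewrite mul1n mulnS; lia.
Qed.

(* x2 |-> t^(n+1), y2 |-> t^(n+2): entry t has weight >= (n+1) rk t, so a
   tableau has weight >= (n+1)(l2 + l3 + 2 l4); and n+1 i + (n+2) j encodes
   (j, i + j) in base n+1. *)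
Lemma vanish_small_sum m2 n2 : m2 <= n - m2 -> n2 <= n - n2 ->
  m2 + n2 < l2 + l3 + 2 * l4 -> g [:: n - m2; m2] [:: n - n2; n2] la = 0.
Proof.
move=> le_m le_n lt_sum.
apply: (@kronecker_vanish _ _ n.+1 n.+2 (n.+1 * (l2 + l3 + 2 * l4)) g_identity) => //.
- move=> T T_ssyt; apply: (@leq_trans (n.+1 * \sum_(c : cells la) rk (T c))).
    by rewrite leq_mul2l rk_bound.
  rewrite big_distrr /=; apply: leq_sum => c _; rewrite /wt /rk.
  by case: (T c) => [[|[|[|[|t]]]] lt_t4] //=; lia.
- move=> i j a b _ le_jn _ le_bn E.
  have E' : j + n.+1 * (i + j) = b + n.+1 * (a + b) by move: E; rewrite !mulnDr; lia.
  have lt_jN : j < n.+1 by rewrite ltnS.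
  have lt_bN : b < n.+1 by rewrite ltnS.
  by have [-> ?] := base_digits_inj lt_jN lt_bN E'; split; lia.
- have : n.+1 * (m2 + n2).+1 <= n.+1 * (l2 + l3 + 2 * l4) by rewrite leq_mul2l lt_sum orbT.
  by rewrite mulnS; lia.
Qed.
End TwoSpecialisations.

Theorem proposition3p6 (l1 l2 l3 l4 m1 m2 n1 n2 : nat)
    (g : seq nat -> seq nat -> seq nat -> int) :
  (l4 <= l3 <= l2)%N -> (l2 <= l1)%N -> (m2 <= m1)%N -> (n2 <= n1)%N ->
  (l1 + l2 + l3 + l4 = m1 + m2)%N -> (m1 + m2 = n1 + n2)%N ->
  kronecker_identity g [:: l1; l2; l3; l4] ->
  ((n2 < l3 + l4)%N \/ (m2 + n2 < l2 + l3 + 2 * l4)%N) ->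
  g [:: m1; m2] [:: n1; n2] [:: l1; l2; l3; l4] = 0.
Proof.
move=> /andP [le43 le32] le21 le_m le_n size_m size_n g_identity cases.
have n_eq : sumn [:: l1; l2; l3; l4] = l1 + l2 + l3 + l4 by rewrite /= addn0 !addnA.
have -> : m1 = sumn [:: l1; l2; l3; l4] - m2 by rewrite n_eq; lia.
have -> : n1 = sumn [:: l1; l2; l3; l4] - n2 by rewrite n_eq; lia.
have le_m' : m2 <= sumn [:: l1; l2; l3; l4] - m2 by rewrite n_eq; lia.
have le_n' : n2 <= sumn [:: l1; l2; l3; l4] - n2 by rewrite n_eq; lia.
case: cases => [lt_n2|lt_sum].
- exact: vanish_small_nu2.
- exact: vanish_small_sum.
Qed.
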